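(* Let $G=(N,E)$ be a finite DAG with influential set $S^{inf.}(G)=\{s_1,\dots,s_m\}$. Then $s_1$ has no out-edges in $G$, and $s_1$ has the maximum progeny in $G$, i.e. $p_{s_1}=\max_{i\in N}p_i$.
   Context: In a DAG $G=(N,E)$ with $N=\{1,\dots,n\}$, $P_i$ is the set of nodes having a directed path to $i$ (including $i$), and $p_i=|P_i|$. Write $p_i\succ p_j$ if $p_i>p_j$, or $p_i=p_j$ and $i<j$. Node $i$ is influential if, in the graph obtained from $G$ by deleting all out-edges of $i$, $p_i\succ p_j$ holds for all $j\ne i$ (progeny measured in that modified graph). The influential set $S^{inf.}(G)=\{s_1,\dots,s_m\}$ consists of all influential nodes, indexed so that $p_{s_1}\succ p_{s_2}\succ\cdots\succ p_{s_m}$, with progeny measured in $G$. *)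

From mathcomp Require Import all_boot.
Set Implicit Arguments. Unset Strict Implicit. Unset Printing Implicit Defensive.

(* Nodes N = {1..n} are represented by 'I_n (node k+1 <-> ordinal k; the
   order on indices is preserved).  A directed graph is an edge relation
   e : rel 'I_n (e x y = edge x -> y). *)

Definition acyclic n (e : rel 'I_n) : Prop :=
  forall x y, e x y -> ~~ connect e y x.

Definition progeny_set n (e : rel 'I_n) (i : 'I_n) : {set 'I_n} :=
  [set j | connect e j i].
Definition progeny n (e : rel 'I_n) (i : 'I_n) : nat := #|progeny_set e i|.

Definition succ_prog n (pi : nat) (i : 'I_n) (pj : nat) (j : 'I_n) : bool :=
  (pj < pi) || ((pi == pj) && (i < j)).

Definition del_out n (e : rel 'I_n) (i : 'I_n) : rel 'I_n :=
  fun x y => (x != i) && e x y.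

Definition influential n (e : rel 'I_n) (i : 'I_n) : bool :=
  [forall j, (j != i) ==>
     succ_prog (progeny (del_out e i) i) i (progeny (del_out e i) j) j].

Definition first_influential n (e : rel 'I_n) (s : 'I_n) : Prop :=
  influential e s /\
  forall t, influential e t -> t != s -> succ_prog (progeny e s) s (progeny e t) t.

From mathcomp Require Import all_boot.
Set Implicit Arguments. Unset Strict Implicit. Unset Printing Implicit Defensive.

(* Along an edge i -> j of a DAG the progeny strictly grows (P_i is a proper
   subset of P_j, as j lies in P_j but not in P_i), so a node of maximal
   progeny is a sink.  Deleting the out-edges of a sink changes nothing, hence
   the node t that is greatest for the order ≻ in G is influential.  Since
   s_1 is the ≻-greatest influential node and ≻ is a strict order, s_1 = t. *)

Section Progeny.

Variables (n : nat) (e : rel 'I_n).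
Hypothesis e_acyclic : acyclic e.

Lemma progeny_lt_edge i j : e i j -> progeny e i < progeny e j.
Proof.
move=> eij; apply: proper_card; apply/properP; split.
  apply/subsetP => x; rewrite !inE => cxi.
  exact: connect_trans cxi (connect1 eij).
by exists j; rewrite inE ?connect0 ?e_acyclic.
Qed.

Lemma max_progeny_sink i :
  (forall j, progeny e j <= progeny e i) -> forall j, ~~ e i j.
Proof.
move=> i_max j; apply/negP => /progeny_lt_edge.
by rewrite ltnNge i_max.
Qed.

End Progeny.

Lemma progeny_del_out_sink n (e : rel 'I_n) i :
  (forall j, ~~ e i j) -> progeny (del_out e i) =1 progeny e.
Proof.
move=> i_sink k; apply: eq_card => x; rewrite !inE.
apply: eq_connect => a b; rewrite /del_out.
by case: eqP => // ->; rewrite (negbTE (i_sink b)).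
Qed.

Lemma succ_prog_leq n p (i : 'I_n) q j : succ_prog p i q j -> q <= p.
Proof. by case/orP => [/ltnW // | /andP[/eqP-> _]]. Qed.

Lemma succ_prog_asym n p (i : 'I_n) q j :
  succ_prog p i q j -> ~~ succ_prog q j p i.
Proof.
rewrite /succ_prog eq_sym; case: ltngtP => //= _ /ltnW.
by rewrite leqNgt.
Qed.

Lemma exists_succ_prog_top n (f : 'I_n -> nat) (i0 : 'I_n) :
  exists t, forall j, j != t -> succ_prog (f t) t (f j) j.
Proof.
set M := \max_(i < n) f i.
have leM j : f j <= M by exact: leq_bigmax.
have [i1 /esym/eqP f_i1] : {i1 : 'I_n | M = f i1}.
  by apply: eq_bigmax; rewrite card_ord (leq_ltn_trans _ (ltn_ord i0)).
case: (@arg_minnP _ i1 (fun i => f i == M) (@nat_of_ord n) f_i1)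
  => t /eqP f_t t_min.
exists t => j j_t; rewrite /succ_prog f_t ltn_neqAle leM andbT.
have [f_j | //] := eqVneq (f j) M.
rewrite /= ltn_neqAle t_min ?f_j // andbT.
by apply: contra j_t => /eqP/val_inj->.
Qed.

Lemma succ_prog_top_max n (f : 'I_n -> nat) t :
  (forall j, j != t -> succ_prog (f t) t (f j) j) -> forall j, f j <= f t.
Proof. by move=> t_top j; have [-> // | /t_top/succ_prog_leq] := eqVneq j t. Qed.

Lemma top_progeny_influential n (e : rel 'I_n) t : acyclic e ->
  (forall j, j != t -> succ_prog (progeny e t) t (progeny e j) j) ->
  influential e t.
Proof.
move=> e_acyclic t_top.
have t_sink := max_progeny_sink e_acyclic (succ_prog_top_max t_top).
apply/forallP => j; apply/implyP => j_t.
by rewrite !progeny_del_out_sink //; apply: t_top.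
Qed.

Theorem mainTheorem5 (n : nat) (e : rel 'I_n) (s : 'I_n) :
  acyclic e -> first_influential e s ->
  (forall j, ~~ e s j) /\ progeny e s = \max_(i < n) progeny e i.
Proof.
move=> e_acyclic [_ s_first].
have [t t_top] := exists_succ_prog_top (progeny e) s.
have t_max := succ_prog_top_max t_top.
have t_inf := top_progeny_influential e_acyclic t_top.
have <- : t = s.
  apply/eqP/negPn/negP => t_s.
  have /succ_prog_asym/negP := s_first t t_inf t_s; apply.
  by apply: t_top; rewrite eq_sym.
split; first exact: max_progeny_sink.
by apply/eqP; rewrite eqn_leq leq_bigmax; apply/bigmax_leqP.
Qed.
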